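(* Let $\mathtt{L}\in\mathcal{L}$ be a line of $\mathbb{S}$ and let $\alpha\in P\cup P'$. If $\alpha$ has distance $2$ (in $\mathbb{S}$) from two points of $\mathtt{L}$, then $\alpha$ is collinear in $\mathbb{S}$ with the third point of $\mathtt{L}$.
   Context: Let $S=(P,L)$ and $S'=(P',L')$ be generalized quadrangles of order $(2,2)$ (every line has 3 points, every point lies on 3 lines, and for each point $x$ and line $l\not\ni x$ exactly one point of $l$ is collinear with $x$), with an isomorphism $x\mapsto x'$ from $S$ to $S'$. In a point-line geometry, $x^{\perp}$ is $x$ together with all points collinear with $x$, and $A^{\perp}=\bigcap_{a\in A}a^{\perp}$. A triad is a set of three pairwise non-collinear points, complete if $|T^{\perp}|=3$. Let $\mathcal{P}=\{(x,y')\in P\times P':y'\in x'^{\perp}\}$ and $\mathcal{L}$ the set of all $3$-subsets $\{(x,u'),(y,v'),(z,w')\}$ of $\mathcal{P}$ where $T=\{x,y,z\}$ (three distinct points) is a line or complete triad of $S$ and $\{u',v',w'\}=T'^{\perp}$ in $S'$ with $u',v',w'$ distinct. The geometry $\mathbb{S}=(\mathbb{P},\mathbb{L})$ has point set $\mathbb{P}=\mathcal{P}\cup P\cup P'$ (disjoint union) and line set $\mathcal{L}\cup\{\{x,(x,u'),u'\}:(x,u')\in\mathcal{P}\}$. Distances are in the collinearity graph of $\mathbb{S}$. *)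

From mathcomp Require Import all_boot.
Set Implicit Arguments. Unset Strict Implicit. Unset Printing Implicit Defensive.

Definition collinear (P : finType) (L : {set {set P}}) (x y : P) : bool :=
  (x != y) && [exists l in L, (x \in l) && (y \in l)].

Definition GQ22 (P : finType) (L : {set {set P}}) : Prop :=
  [/\ (forall l, l \in L -> #|l| = 3),
      (forall x : P, #|[set l in L | x \in l]| = 3) &
      (forall (x : P) (l : {set P}), l \in L -> x \notin l ->
         exists! y, y \in l /\ collinear L x y)].

Definition perp (P : finType) (L : {set {set P}}) (x : P) : {set P} :=
  [set y | (y == x) || collinear L x y].

Definition setperp (P : finType) (L : {set {set P}}) (A : {set P}) : {set P} :=
  \bigcap_(a in A) perp L a.

Definition triad (P : finType) (L : {set {set P}}) (T : {set P}) : Prop :=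
  #|T| = 3 /\ (forall x y, x \in T -> y \in T -> x != y -> ~~ collinear L x y).

Definition complete_triad (P : finType) (L : {set {set P}}) (T : {set P}) : Prop :=
  triad L T /\ #|setperp L T| = 3.

(* isomorphism x |-> x' = f x from S=(P,L) to S'=(P',L') *)
Definition geom_iso (P P' : finType) (L : {set {set P}}) (L' : {set {set P'}})
  (f : P -> P') : Prop :=
  bijective f /\ (forall l : {set P}, (f @: l \in L') = (l \in L)).

(* points of the geometry bbS: (P x P') + (P + P');
   inl (x,y') for elements of calP, inr (inl x) for x in P,
   inr (inr u') for u' in P'. Only inl-elements in calP are genuine points;
   the others lie on no line. *)
Definition bbPt (P P' : finType) := ((P * P') + (P + P'))%type.

Definition calP (P P' : finType) (L' : {set {set P'}}) (f : P -> P')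
  (p : P * P') : Prop := p.2 \in perp L' (f p.1).

Definition calL (P P' : finType) (L : {set {set P}}) (L' : {set {set P'}})
  (f : P -> P') (B : {set bbPt P P'}) : Prop :=
  exists (x y z : P) (u v w : P'),
    [/\ x != y, y != z & x != z] /\
    ([set x; y; z] \in L \/ complete_triad L [set x; y; z]) /\
    [set u; v; w] = setperp L' (f @: [set x; y; z]) /\
    [/\ u != v, v != w & u != w] /\
    [/\ calP L' f (x, u), calP L' f (y, v) & calP L' f (z, w)] /\
    B = [set inl (x, u); inl (y, v); inl (z, w)].

Definition bbLine (P P' : finType) (L : {set {set P}}) (L' : {set {set P'}})
  (f : P -> P') (B : {set bbPt P P'}) : Prop :=
  calL L L' f B \/
  exists (x : P) (u : P'), calP L' f (x, u) /\
    B = [set inr (inl x); inl (x, u); inr (inr u)].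

Definition bbColl (P P' : finType) (L : {set {set P}}) (L' : {set {set P'}})
  (f : P -> P') (a b : bbPt P P') : Prop :=
  a <> b /\ exists B, bbLine L L' f B /\ a \in B /\ b \in B.

Definition bbDist2 (P P' : finType) (L : {set {set P}}) (L' : {set {set P'}})
  (f : P -> P') (a b : bbPt P P') : Prop :=
  a <> b /\ ~ bbColl L L' f a b /\
  exists c, bbColl L L' f a c /\ bbColl L L' f c b.

(* In the new geometry a point a of P lies only on the lines {a, (a,u'), u'}, so it is collinear
   exactly with its pairs (a,u') and the points u' of a'^perp.  Hence a at distance 2
   from (x,u') forces a <> x and u' in a'^perp; dually, u' of S' at distance 2 from
   (x,v') forces u' <> v' and u' in x'^perp.  Now let the line be
   {(x1,u1'), (x2,u2'), (x3,u3')} with T = {x1,x2,x3} a line or a complete triad and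
   T'^perp = {u1',u2',u3'}.  In GQ(2,2) we have {u1',u2'}^perp = T' and
   {x1',x2'}^perp = T'^perp: for a line both sides are the line itself, for a complete
   triad both follow from |{p,q}^perp| <= 3 for non-collinear p, q.  So a point a of S
   at distance 2 from the first two points has a' in T', i.e. a = x3, and a point b'
   of S' has b' in T'^perp, i.e. b' = u3'; either way it is collinear with (x3,u3'). *)

From mathcomp Require Import all_boot.
Set Implicit Arguments. Unset Strict Implicit. Unset Printing Implicit Defensive.

Definition line_or_ctriad (P : finType) (L : {set {set P}}) (T : {set P}) : Prop :=
  T \in L \/ complete_triad L T.

Lemma card_set3 (T : finType) (a b c : T) :
  a != b -> b != c -> a != c -> #|[set a; b; c]| = 3.
Proof.
by move=> ab bc ac; rewrite setUC cardsU1 cards2 !inE negb_or !(eq_sym c) ab ac bc.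
Qed.

Lemma set3_eq (T : finType) (S : {set T}) a b c :
  #|S| <= 3 -> a \in S -> b \in S -> c \in S -> a != b -> b != c -> a != c ->
  S = [set a; b; c].
Proof.
move=> S3 aS bS cS ab bc ac; apply/esym/eqP; rewrite eqEcard card_set3 // S3 andbT.
by apply/subsetP => t; rewrite !inE => /orP[/orP[]|]/eqP->.
Qed.

Lemma card_set3_le (T : finType) (a b c : T) : #|[set a; b; c]| <= 3.
Proof. by rewrite setUC !cardsU1 cards1; case: (_ \notin _); case: (_ \notin _). Qed.

Lemma imset_set3 (T U : finType) (f : T -> U) a b c :
  f @: [set a; b; c] = [set f a; f b; f c].
Proof. by rewrite !imsetU !imset_set1. Qed.

Lemma pair_set3_neq (X Y : finType) (x y z : X) (u v w : Y) p q :
  x != y -> y != z -> x != z -> u != v -> v != w -> u != w ->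
  p \in [set (x, u); (y, v); (z, w)] -> q \in [set (x, u); (y, v); (z, w)] -> p != q ->
  p.1 != q.1 /\ p.2 != q.2.
Proof.
move=> xy yz xz uv vw uw.
rewrite !inE => /orP[/orP[]|]/eqP-> /orP[/orP[]|]/eqP->; rewrite ?eqxx //= => _;
  by split; rewrite // eq_sym.
Qed.

Section Quadrangle.
Variables (Q : finType) (M : {set {set Q}}).

Lemma collinear_sym a b : collinear M a b = collinear M b a.
Proof.
rewrite /collinear eq_sym; congr (_ && _).
by apply/existsP/existsP => -[l /and3P[lM al bl]]; exists l; rewrite lM al bl.
Qed.

Lemma perp_sym a b : (a \in perp M b) = (b \in perp M a).
Proof. by rewrite !inE eq_sym collinear_sym. Qed.

Lemma perp_collinear a b : a \in perp M b -> a != b -> collinear M a b.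
Proof. by rewrite inE collinear_sym => /orP[/eqP->|//]; rewrite eqxx. Qed.

Lemma mem_setperp A t a : t \in setperp M A -> a \in A -> t \in perp M a.
Proof. by move/bigcapP; apply. Qed.

Lemma line_perp l a b : l \in M -> a \in l -> b \in l -> a \in perp M b.
Proof.
move=> lM al bl; rewrite inE; case: eqP => //= /eqP ab.
by rewrite /collinear eq_sym ab; apply/existsP; exists l; rewrite lM bl al.
Qed.

Lemma line_sub_setperp l : l \in M -> l \subset setperp M l.
Proof.
by move=> lM; apply/subsetP => a al; apply/bigcapP => b bl; exact: line_perp lM al bl.
Qed.

Hypothesis GQ : GQ22 M.

Lemma perp2_sub_line l a b :
  l \in M -> a \in l -> b \in l -> a != b -> perp M a :&: perp M b \subset l.
Proof.
case: GQ => _ _ unique_coll lM al bl ab; apply/subsetP => c /setIP[ca cb].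
apply/negPn/negP => cl.
have [ca' cb'] : c != a /\ c != b by split; apply: contraNneq cl => ->.
have [y [_ y_unique]] := unique_coll c l lM cl.
have := y_unique a (conj al (perp_collinear ca ca')).
have := y_unique b (conj bl (perp_collinear cb cb')).
by move=> yb ya; move: ab; rewrite -ya -yb eqxx.
Qed.

Lemma setperp_line l : l \in M -> setperp M l = l.
Proof.
move=> lM; apply/eqP; rewrite eqEsubset line_sub_setperp // andbT.
case: GQ => card_line _ _.
have /card_gt1P[a [b [al bl ab]]] : 1 < #|l| by rewrite card_line.
apply: subset_trans (perp2_sub_line lM al bl ab).
by apply/subsetP => c cl; rewrite inE !(mem_setperp cl).
Qed.

Lemma collinear_perp2 p q c d : collinear M p q ->
  c \in perp M p :&: perp M q -> d \in perp M p :&: perp M q -> c \in perp M d.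
Proof.
case/andP => pq /existsP[l /and3P[lM pl ql]] cpq dpq.
have /subsetP sub_l := perp2_sub_line lM pl ql pq.
exact: line_perp lM (sub_l c cpq) (sub_l d dpq).
Qed.

Lemma card_perp2 p q : p != q -> ~~ collinear M p q -> #|perp M p :&: perp M q| <= 3.
Proof.
case: GQ => _ card_pencil unique_coll pq npq.
have neq_pq c : c \in perp M p :&: perp M q -> c != p /\ c != q.
  case/setIP => cp cq; split; apply: contraNneq npq => E; rewrite E in cp cq.
    exact: perp_collinear.
  by rewrite collinear_sym perp_collinear // eq_sym.
pose line_to c := odflt set0 [pick l in M | (p \in l) && (c \in l)].
have line_toP c : c \in perp M p :&: perp M q ->
    [/\ line_to c \in M, p \in line_to c & c \in line_to c].
  move=> cpq; have [cp _] := neq_pq c cpq; case/setIP: cpq => pc _.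
  case/andP: (perp_collinear pc cp) => _ /existsP[l /and3P[lM cl pl]].
  rewrite /line_to; case: pickP => [l' /and3P[-> -> ->] // | /(_ l)].
  by rewrite lM pl cl.
rewrite -(card_pencil p) -(card_in_imset (f := line_to)).
  apply: subset_leq_card; apply/subsetP => _ /imsetP[c cpq ->].
  by have [lM pl _] := line_toP c cpq; rewrite inE lM pl.
move=> c d cpq dpq cd_line.
have [lM pl cl] := line_toP c cpq; have [_ _ dl] := line_toP d dpq.
rewrite -cd_line in dl.
have ql : q \notin line_to c.
  apply: contra npq => ql; rewrite /collinear pq.
  by apply/existsP; exists (line_to c); rewrite lM pl ql.
have [y [_ y_unique]] := unique_coll q _ lM ql.
have [_ cq] := neq_pq c cpq; have [_ dq] := neq_pq d dpq.
case/setIP: cpq => _ qc; case/setIP: dpq => _ qd.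
by rewrite -(y_unique c) ?(y_unique d) //; split; rewrite // collinear_sym perp_collinear.
Qed.

Lemma perp2_sub_setperp X a b : line_or_ctriad M X -> a \in X -> b \in X -> a != b ->
  perp M a :&: perp M b \subset setperp M X.
Proof.
case=> [XM | [[_ X_ncoll] X_card]] aX bX ab.
  by rewrite setperp_line //; exact: perp2_sub_line.
have sub : setperp M X \subset perp M a :&: perp M b.
  by apply/subsetP => c cX; rewrite inE !(mem_setperp cX).
suff -> : perp M a :&: perp M b = setperp M X by [].
by apply/esym/eqP; rewrite eqEcard sub X_card card_perp2 ?X_ncoll.
Qed.

Lemma setperp_perp2_sub X u v : line_or_ctriad M X ->
  u \in setperp M X -> v \in setperp M X -> u != v -> perp M u :&: perp M v \subset X.
Proof.
case=> [XM | [[X_card X_ncoll] _]] uX vX uv.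
  by rewrite setperp_line // in uX vX; exact: perp2_sub_line.
have sub : X \subset perp M u :&: perp M v.
  by apply/subsetP => x xX; rewrite inE !(perp_sym x) (mem_setperp uX) ?(mem_setperp vX).
have /card_gt1P[a [b [aX bX ab]]] : 1 < #|X| by rewrite X_card.
have uv_ncoll : ~~ collinear M u v.
  apply/negP => /collinear_perp2 /(_ (subsetP sub a aX) (subsetP sub b bX)) ab_perp.
  by move/negP: (X_ncoll a b aX bX ab); apply; exact: perp_collinear.
suff -> : perp M u :&: perp M v = X by [].
by apply/esym/eqP; rewrite eqEcard sub X_card card_perp2.
Qed.

End Quadrangle.

Section Isomorphism.
Variables (P P' : finType) (L : {set {set P}}) (L' : {set {set P'}}) (f : P -> P').
Hypothesis iso : geom_iso L L' f.

Lemma iso_inj : injective f.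
Proof. by case: iso => /bij_inj. Qed.

Lemma collinear_iso a b : collinear L' (f a) (f b) = collinear L a b.
Proof.
case: iso => [[g fK gK] line_iso]; rewrite /collinear (inj_eq iso_inj); congr (_ && _).
apply/existsP/existsP => -[l /and3P[lM al bl]]; last first.
  by exists (f @: l); rewrite line_iso lM !imset_f.
exists (g @: l); rewrite -line_iso -imset_comp (eq_imset _ gK) imset_id lM.
by rewrite -(fK a) -(fK b) !imset_f.
Qed.

Lemma perp_iso a b : (f a \in perp L' (f b)) = (a \in perp L b).
Proof. by rewrite !inE (inj_eq iso_inj) collinear_iso. Qed.

Lemma setperp_iso (A : {set P}) : setperp L' (f @: A) = f @: setperp L A.
Proof.
case: iso => [[g fK gK] _]; apply/setP => t'; rewrite -[t']gK (mem_imset _ _ iso_inj).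
apply/bigcapP/bigcapP => [t_perp a aA | t_perp _ /imsetP[a aA ->]].
  by rewrite -perp_iso t_perp ?imset_f.
by rewrite perp_iso t_perp.
Qed.

Lemma line_or_ctriad_iso T : line_or_ctriad L T -> line_or_ctriad L' (f @: T).
Proof.
case: iso => _ line_iso [TL | [[T_card T_ncoll] T_perp_card]].
  by left; rewrite line_iso.
right; split; last by rewrite setperp_iso (card_imset _ iso_inj).
split; first by rewrite (card_imset _ iso_inj).
move=> _ _ /imsetP[a aT ->] /imsetP[b bT ->].
by rewrite (inj_eq iso_inj) collinear_iso; exact: T_ncoll.
Qed.

End Isomorphism.

Section Collinearity.
Variables (P P' : finType) (L : {set {set P}}) (L' : {set {set P'}}) (f : P -> P').

Local Notation coll := (bbColl L L' f).
Local Notation trivial_line x u :=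
  ([set inr (inl x); inl (x, u); inr (inr u)] : {set bbPt P P'}).
Local Notation dist2 := (bbDist2 L L' f).

Definition bbNeighbour (s : P + P') (t : bbPt P P') : bool :=
  match s, t with
  | inl a, inl p => (p.1 == a) && (p.2 \in perp L' (f a))
  | inl a, inr (inr b) | inr b, inr (inl a) => b \in perp L' (f a)
  | inr b, inl p => (p.2 == b) && (b \in perp L' (f p.1))
  | _, _ => false
  end.

Lemma calL_inr B s : calL L L' f B -> inr s \notin B.
Proof. by case=> x [y [z [u [v [w [_ [_ [_ [_ [_ ->]]]]]]]]]]; rewrite !inE. Qed.

Lemma calL_pair_perp B p q : calL L L' f B -> inl p \in B -> inl q \in B ->
  q.2 \in perp L' (f p.1).
Proof.
case=> x [y [z [u [v [w [_ [_ [U_def [_ [_ ->]]]]]]]]]] pB qB.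
have pT : p.1 \in [set x; y; z].
  by move: pB; rewrite !inE => /orP[/orP[]|]/eqP[->]; rewrite eqxx ?orbT.
have : q.2 \in [set u; v; w].
  by move: qB; rewrite !inE => /orP[/orP[]|]/eqP[->]; rewrite eqxx ?orbT.
by rewrite U_def => /mem_setperp; apply; exact: imset_f.
Qed.

Lemma bbColl_sym a b : coll a b -> coll b a.
Proof. by case=> ab [B [BL [aB bB]]]; split; [apply: nesym | exists B]. Qed.

Lemma mem_trivial_line t x u : t \in trivial_line x u ->
  [\/ t = inr (inl x), t = inl (x, u) | t = inr (inr u)].
Proof.
by rewrite !inE => /orP[/orP[]|]/eqP->; [constructor 1 | constructor 2 | constructor 3].
Qed.

Lemma bbColl_trivial_line x u s t : u \in perp L' (f x) ->
  s \in trivial_line x u -> t \in trivial_line x u -> s <> t -> coll s t.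
Proof.
by move=> xu sl tl st; split=> //; exists (trivial_line x u); split=> //; right; exists x, u.
Qed.

Lemma bbColl_inr s t : coll (inr s) t -> bbNeighbour s t.
Proof.
case=> st [B [[BL | [x [u [xu ->]]]] [sB tB]]].
  by rewrite (negPf (calL_inr s BL)) in sB.
case/mem_trivial_line: sB st => // -[] ->; case/mem_trivial_line: tB => -> st //=.
all: by rewrite ?eqxx //; case: st.
Qed.

Lemma bbColl_P_pairI x u : u \in perp L' (f x) -> coll (inr (inl x)) (inl (x, u)).
Proof. by move=> xu; apply: (bbColl_trivial_line xu); rewrite ?inE ?eqxx ?orbT. Qed.

Lemma bbColl_P'_pairI x u : u \in perp L' (f x) -> coll (inr (inr u)) (inl (x, u)).
Proof. by move=> xu; apply: (bbColl_trivial_line xu); rewrite ?inE ?eqxx ?orbT. Qed.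

Lemma bbColl_pair_pair p q : coll (inl p) (inl q) -> q.2 \in perp L' (f p.1).
Proof.
case=> pq [B [[BL | [x [u [xu ->]]]] [pB qB]]]; first exact: calL_pair_perp BL pB qB.
by case/mem_trivial_line: pB pq => // -[->]; case/mem_trivial_line: qB => // -[->].
Qed.

Lemma bbDist2_P_pair a x u : u \in perp L' (f x) ->
  dist2 (inr (inl a)) (inl (x, u)) -> a != x /\ u \in perp L' (f a).
Proof.
move=> xu [_ [ncoll [c [/bbColl_inr ac cxu]]]]; split.
  by apply: contra_not_neq ncoll => ->; exact: bbColl_P_pairI.
case: c ac cxu => [[a' u'] /= /andP[/eqP-> _] /bbColl_pair_pair //| [//| b] /= ab].
by move/bbColl_inr => /= /andP[/eqP-> _].
Qed.

Lemma bbDist2_P'_pair b x u : u \in perp L' (f x) ->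
  dist2 (inr (inr b)) (inl (x, u)) -> b != u /\ b \in perp L' (f x).
Proof.
move=> xu [_ [ncoll [c [/bbColl_inr bc cxu]]]]; split.
  by apply: contra_not_neq ncoll => ->; exact: bbColl_P'_pairI.
case: c bc cxu => [[x' u'] /= /andP[/eqP-> _] /bbColl_sym/bbColl_pair_pair //|].
case=> [a|//] /= ba.
by move/bbColl_inr => /= /andP[/eqP-> _].
Qed.

End Collinearity.

Lemma calL_dist2_coll (P P' : finType) (L : {set {set P}}) (L' : {set {set P'}})
    (f : P -> P') x1 x2 x3 u1 u2 u3 alpha :
  GQ22 L' -> geom_iso L L' f -> line_or_ctriad L [set x1; x2; x3] ->
  setperp L' (f @: [set x1; x2; x3]) = [set u1; u2; u3] -> x1 != x2 -> u1 != u2 ->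
  bbDist2 L L' f (inr alpha) (inl (x1, u1)) -> bbDist2 L L' f (inr alpha) (inl (x2, u2)) ->
  bbColl L L' f (inr alpha) (inl (x3, u3)).
Proof.
move=> GQ' iso T_lct TU x12 u12.
set T := [set x1; x2; x3] in T_lct TU *; set U := [set u1; u2; u3] in TU *.
have fT_lct := line_or_ctriad_iso iso T_lct.
have U_perp t a : t \in U -> a \in T -> t \in perp L' (f a).
  by rewrite -TU => /mem_setperp tT aT; apply/tT/imset_f.
have [x1T x2T x3T] : [/\ x1 \in T, x2 \in T & x3 \in T] by rewrite !inE !eqxx ?orbT.
have [u1U u2U u3U] : [/\ u1 \in U, u2 \in U & u3 \in U] by rewrite !inE !eqxx ?orbT.
case: alpha => [a | b].
  move=> /(bbDist2_P_pair (U_perp _ _ u1U x1T)) [ax1 u1a].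
  move=> /(bbDist2_P_pair (U_perp _ _ u2U x2T)) [ax2 u2a].
  have : f a \in f @: T.
    apply: subsetP (setperp_perp2_sub GQ' fT_lct _ _ u12) _ _; rewrite ?TU //.
    by rewrite inE !(perp_sym _ (f a)) u1a.
  rewrite (mem_imset _ _ (iso_inj iso)) !inE (negbTE ax1) (negbTE ax2) /= => /eqP->.
  exact/bbColl_P_pairI/U_perp.
move=> /(bbDist2_P'_pair (U_perp _ _ u1U x1T)) [bu1 bx1].
move=> /(bbDist2_P'_pair (U_perp _ _ u2U x2T)) [bu2 bx2].
have : b \in U.
  rewrite -TU; apply: subsetP (perp2_sub_setperp GQ' fT_lct _ _ _) _ _.
  - exact: imset_f x1T.
  - exact: imset_f x2T.
  - by rewrite (inj_eq (iso_inj iso)).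
  - by rewrite inE bx1.
rewrite !inE (negbTE bu1) (negbTE bu2) /= => /eqP->.
exact/bbColl_P'_pairI/U_perp.
Qed.

Theorem proposition4p7 (P P' : finType) (L : {set {set P}}) (L' : {set {set P'}})
  (f : P -> P') :
  GQ22 L -> GQ22 L' -> geom_iso L L' f ->
  forall (B : {set bbPt P P'}), calL L L' f B ->
  forall (alpha : P + P') (p q r : bbPt P P'),
    p \in B -> q \in B -> r \in B -> p != q -> q != r -> p != r ->
    bbDist2 L L' f (inr alpha) p -> bbDist2 L L' f (inr alpha) q ->
    bbColl L L' f (inr alpha) r.
Proof.
move=> _ GQ' iso B [x [y [z [u [v [w [[xy yz xz] [T_lct [TU [[uv vw uw] [_ ->]]]]]]]]]]].
move=> alpha p q r; rewrite -(imset_set3 (@inl _ (P + P'))).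
move=> /imsetP[[x1 u1] G1 ->] /imsetP[[x2 u2] G2 ->] /imsetP[[x3 u3] G3 ->].
rewrite !(inj_eq inl_inj) => n12 n23 n13.
have EG := set3_eq (card_set3_le _ _ _) G1 G2 G3 n12 n23 n13.
have [x12 u12] := pair_set3_neq xy yz xz uv vw uw G1 G2 n12.
have ET : [set x; y; z] = [set x1; x2; x3].
  by have := congr1 (fun S : {set P * P'} => fst @: S) EG; rewrite !imset_set3.
have EU : [set u; v; w] = [set u1; u2; u3].
  by have := congr1 (fun S : {set P * P'} => snd @: S) EG; rewrite !imset_set3.
rewrite ET in T_lct TU; rewrite EU in TU.
exact: calL_dist2_coll GQ' iso T_lct (esym TU) x12 u12.
Qed.
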